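(* Let $\mathcal A=\{0,1\}^d\subset\mathbb R^d$ be the vertex set of the unit cube. Then $\mathrm{PWidth}(\mathcal A)=1/\sqrt d$.
   Context: Euclidean norm and inner product. For a finite set $\mathcal B\subseteq\mathbb R^d$ and $x\in\mathrm{conv}(\mathcal B)$, $\mathcal S_x(\mathcal B)$ is the family of subsets $S\subseteq\mathcal B$ such that $x$ is a proper convex combination of all elements of $S$ (all coefficients positive). For $r\ne0$, $\mathrm{PdirW}(\mathcal B,r,x):=\min_{S\in\mathcal S_x(\mathcal B)}\max_{s\in\mathcal B,\,v\in S}\langle r/\|r\|,s-v\rangle$. The pyramidal width is $\mathrm{PWidth}(\mathcal A):=\inf\{\mathrm{PdirW}(\mathcal K\cap\mathcal A,r,x)\}$ over all nonempty faces $\mathcal K$ of $\mathrm{conv}(\mathcal A)$ (including $\mathrm{conv}(\mathcal A)$ itself), all $x\in\mathcal K$, and all $r\in\mathrm{cone}(\mathcal K-x)\setminus\{0\}$, where $\mathrm{cone}(\mathcal K-x)=\{\sum_i\lambda_i(y_i-x):\lambda_i\ge0,\ y_i\in\mathcal K\}$. *)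

From HB Require Import structures.
From mathcomp Require Import all_boot all_order all_algebra.
Set Implicit Arguments. Unset Strict Implicit. Unset Printing Implicit Defensive.
Import Order.TTheory GRing.Theory Num.Theory.
Local Open Scope ring_scope.

Section PyramidalWidth.
Variables (R : rcfType) (d : nat).
Notation vec := 'rV[R]_d.

Definition dot (u v : vec) : R := \sum_(j < d) u 0 j * v 0 j.
Definition enorm (u : vec) : R := Num.sqrt (dot u u).

(* A finite point set is given as an injective family a : I -> R^d over a finType I;
   subsets of the point set are subsets of I. *)
Variables (I : finType) (a : I -> vec).

Definition in_conv (T : {set I}) (x : vec) : Prop :=
  exists w : I -> R, (forall i, i \in T -> 0 <= w i) /\
    \sum_(i in T) w i = 1 /\ x = \sum_(i in T) w i *: a i.

Definition proper_comb (S : {set I}) (x : vec) : Prop :=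
  exists w : I -> R, (forall i, i \in S -> 0 < w i) /\
    \sum_(i in S) w i = 1 /\ x = \sum_(i in S) w i *: a i.

(* max_{s in T, v in S} < r/|r|, s - v >.  Using 0 as neutral element is harmless:
   for nonempty S included in T the true maximum is >= 0 (take s = v). *)
Definition dirw (T : {set I}) (r : vec) (S : {set I}) : R :=
  \big[Num.max/0]_(s in T) \big[Num.max/0]_(v in S)
     dot ((enorm r)^-1 *: r) (a s - a v).

Definition PdirW_is (T : {set I}) (r x : vec) (w : R) : Prop :=
  (exists S : {set I}, S \subset T /\ proper_comb S x /\ w = dirw T r S) /\
  (forall S : {set I}, S \subset T -> proper_comb S x -> w <= dirw T r S).

(* Nonempty faces of conv(A): K = conv(A) ∩ {y | <c,y> = m} where <c,a> <= m on A
   (c = 0, m = 0 gives conv(A) itself). *)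
Definition face_ok (c : vec) (m : R) : Prop :=
  (forall i, dot c (a i) <= m) /\ (exists y, in_conv setT y /\ dot c y = m).
Definition in_face (c : vec) (m : R) (y : vec) : Prop :=
  in_conv setT y /\ dot c y = m.
Definition face_pts (c : vec) (m : R) : {set I} := [set i | dot c (a i) == m].

Definition in_cone (K : vec -> Prop) (x r : vec) : Prop :=
  exists (n : nat) (lam : 'I_n -> R) (y : 'I_n -> vec),
    (forall k, 0 <= lam k) /\ (forall k, K (y k)) /\
    r = \sum_(k < n) lam k *: (y k - x).

(* the set whose infimum is PWidth(A) *)
Definition PWidth_val (w : R) : Prop :=
  exists (c : vec) (m : R) (x r : vec),
    face_ok c m /\ in_face c m x /\ in_cone (in_face c m) x r /\ r != 0 /\
    PdirW_is (face_pts c m) r x w.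

End PyramidalWidth.

Definition is_inf (R : realFieldType) (P : R -> Prop) (z : R) : Prop :=
  (forall w, P w -> z <= w) /\
  (forall z', (forall w, P w -> z' <= w) -> z' <= z).

Definition cube_pt (R : rcfType) (d : nat) (f : {ffun 'I_d -> bool}) : 'rV[R]_d :=
  \row_(j < d) (f j)%:R.

From mathcomp Require Import all_boot all_order all_algebra.
From mathcomp Require Import ring lra.
Import Order.TTheory GRing.Theory Num.Theory.
Local Open Scope ring_scope.
Set Implicit Arguments. Unset Strict Implicit.

(* Lower bound: let j maximise |r_j|, so that |r| <= sqrt d |r_j|.  Since r points
   into the face K from x, x_j cannot sit at the bound 0 or 1 towards which r_j
   pushes, so some vertex v in S has the opposite coordinate; and K is not
   orthogonal to e_j (otherwise r_j = 0), so flipping coordinate j of v stays in K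
   and gives a vertex s with <r, s - v> = |r_j| >= |r| / sqrt d.
   Upper bound: on the whole cube take S = {e_1, ..., e_d}, x its barycentre and
   r = -(1, ..., 1); then <r, s - v> = 1 - |s|_1 <= 1 for every vertex s. *)

Section Dot.
Variables (R : rcfType) (d : nat).
Implicit Types (u v w x r : 'rV[R]_d).

Lemma dot0l u : dot 0 u = 0.
Proof. by rewrite /dot big1 // => k _; rewrite mxE mul0r. Qed.

Lemma dotZl k u v : dot (k *: u) v = k * dot u v.
Proof. by rewrite /dot mulr_sumr; apply: eq_bigr => j _; rewrite mxE mulrA. Qed.

Lemma dotBr u v w : dot u (v - w) = dot u v - dot u w.
Proof. by rewrite /dot -sumrB; apply: eq_bigr => j _; rewrite !mxE mulrBr. Qed.

Lemma sum_scale_coord (I : finType) (P : pred I) (c : I -> R) (b : I -> 'rV[R]_d) j :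
  (\sum_(i | P i) c i *: b i) 0 j = \sum_(i | P i) c i * b i 0 j.
Proof. by rewrite summxE; apply: eq_bigr => i _; rewrite mxE. Qed.

Lemma dot_sumr (I : finType) (P : pred I) (c : I -> R) (b : I -> 'rV[R]_d) u :
  dot u (\sum_(i | P i) c i *: b i) = \sum_(i | P i) c i * dot u (b i).
Proof.
rewrite /dot; under eq_bigr do rewrite sum_scale_coord mulr_sumr.
rewrite exchange_big; apply: eq_bigr => i _; rewrite mulr_sumr.
by apply: eq_bigr => j _; rewrite mulrCA.
Qed.

Lemma enorm_gt0 u : u != 0 -> 0 < enorm u.
Proof.
case/rV0Pn => j uj; rewrite /enorm sqrtr_gt0 /dot (bigD1 j) //=.
apply: ltr_pwDl; first by rewrite -expr2 exprn_even_gt0.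
by apply: sumr_ge0 => k _; rewrite -expr2 sqr_ge0.
Qed.

Lemma enorm_le_sqrt_dim u (M : R) :
  0 <= M -> (forall k, `|u 0 k| <= M) -> enorm u <= Num.sqrt d%:R * M.
Proof.
move=> M_ge0 le_M; rewrite -[M]ger0_norm // -sqrtr_sqr -sqrtrM ?ler0n // ler_sqrt.
  rewrite /dot mulr_natl -[X in _ *+ X]card_ord -sumr_const; apply: ler_sum => k _.
  by rewrite -expr2 -real_normK ?num_real // ler_sqr ?nnegrE ?normr_ge0.
by rewrite mulr_ge0 ?ler0n ?sqr_ge0.
Qed.

Lemma cone_coord_ge (K : 'rV[R]_d -> Prop) x r j (e : R) : in_cone K x r ->
  (forall y, K y -> 0 <= e * (y 0 j - x 0 j)) -> 0 <= e * r 0 j.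
Proof.
case=> n [lam [y [lam_ge0 [Ky ->]]]] e_ge0; rewrite sum_scale_coord mulr_sumr.
by apply: sumr_ge0 => k _; rewrite !mxE mulrCA mulr_ge0 ?e_ge0.
Qed.

Variables (I : finType) (a : I -> 'rV[R]_d).

Lemma le_dirw (T S : {set I}) r (s v : I) : s \in T -> v \in S ->
  dot ((enorm r)^-1 *: r) (a s - a v) <= dirw a T r S.
Proof.
by move=> sT vS; apply: le_trans (le_bigmax_cond _ _ sT); apply: le_bigmax_cond.
Qed.

Lemma proper_comb_in_conv (S : {set I}) x : proper_comb a S x -> in_conv a setT x.
Proof.
case=> w [w_gt0 [w1 ->]]; exists (fun i => if i \in S then w i else 0).
have sum_ext (V : zmodType) (F : I -> V) :
    \sum_(i in setT) (if i \in S then F i else 0) = \sum_(i in S) F i.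
  by rewrite -big_mkcondr; apply: eq_bigl => i; rewrite inE.
split; first by move=> i _; case: ifPn => // /w_gt0/ltW.
split; first by rewrite sum_ext.
by rewrite -sum_ext; apply: eq_bigr => i _; case: ifP; rewrite ?scale0r.
Qed.

End Dot.

Section CubeFaces.
Variables (R : rcfType) (d : nat).
Notation cp := (@cube_pt R d).
Notation B := {ffun 'I_d -> bool}.

Lemma cube_ptE (f : B) j : cp f 0 j = (f j)%:R.
Proof. by rewrite /cube_pt mxE. Qed.

Definition set_coord (f : B) j b : B := [ffun k => if k == j then b else f k].

Lemma dot_set_coord u (f : B) j b :
  dot u (cp (set_coord f j b)) = dot u (cp f) + u 0 j * (b%:R - (f j)%:R).
Proof.
rewrite /dot (bigD1 j) //= [in RHS](bigD1 j) //= !cube_ptE ffunE eqxx.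
rewrite (eq_bigr (fun k => u 0 k * cp f 0 k)); last first.
  by move=> k /negbTE ne; rewrite !cube_ptE ffunE ne.
ring.
Qed.

Lemma in_conv_cube_coord y j : in_conv cp setT y -> 0 <= y 0 j <= 1.
Proof.
case=> w [w_ge0 [w1 ->]]; rewrite sum_scale_coord; apply/andP; split.
  by apply: sumr_ge0 => i _; rewrite cube_ptE mulr_ge0 ?w_ge0.
rewrite -w1; apply: ler_sum => i _; rewrite cube_ptE.
by case: (i j); rewrite ?mulr1 // mulr0 w_ge0.
Qed.

Lemma proper_comb_vertex S x j (b : bool) : proper_comb cp S x ->
  x 0 j != b%:R -> exists2 v, v \in S & v j = ~~ b.
Proof.
case=> w [_ [w1 ->]] xj.
case: (pickP [pred v in S | v j == ~~ b]) => [v /andP[vS /eqP] | none].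
  by exists v.
case/eqP: xj; rewrite sum_scale_coord.
transitivity (\sum_(v in S) w v * b%:R)%R; last by rewrite -mulr_suml w1 mul1r.
apply: eq_bigr => v vS; move: (none v); rewrite /= vS cube_ptE.
by case: (v j); case: b {none}.
Qed.

Variables (c : 'rV[R]_d) (m : R).
Hypothesis face_cm : face_ok cp c m.

Lemma in_face_weights y : in_face cp c m y ->
  exists w : B -> R, [/\ \sum_(i in setT) w i = 1,
    y = \sum_(i in setT) w i *: cp i & forall i, w i != 0 -> dot c (cp i) = m].
Proof.
move=> [[w [w_ge0 [w1 ey]]] cy]; exists w; split=> // i wi.
have slack_ge0 k : k \in setT -> 0 <= w k * (m - dot c (cp k)).
  by move=> kT; rewrite mulr_ge0 ?w_ge0 // subr_ge0 face_cm.1.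
have slack0 : \sum_(k in setT) w k * (m - dot c (cp k)) = 0.
  under eq_bigr do rewrite mulrBr.
  by rewrite sumrB -mulr_suml w1 mul1r -dot_sumr -ey cy subrr.
move/eqP: (psumr_eq0P slack_ge0 slack0 (in_setT i)).
by rewrite mulf_eq0 (negbTE wi) subr_eq0 => /eqP.
Qed.

(* Vertices of the face maximise <c, .> over the cube, which fixes every
   coordinate j with c_j <> 0. *)
Lemma face_vertex_coord (i : B) j : dot c (cp i) = m ->
  c 0 j != 0 -> i j = (0 < c 0 j).
Proof.
move=> ci cj; have := face_cm.1 (set_coord i j (0 < c 0 j)).
rewrite dot_set_coord ci.
by case: ltrgtP cj => // c_sgn _; case: (i j) => //= ?; exfalso; lra.
Qed.

Lemma face_coord y j : in_face cp c m y -> c 0 j != 0 -> y 0 j = (0 < c 0 j)%R%:R.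
Proof.
move=> fy cj; have [w [w1 -> face_w]] := in_face_weights fy.
rewrite sum_scale_coord.
transitivity (\sum_(i in setT) w i * (0 < c 0 j)%R%:R)%R.
  2: by rewrite -mulr_suml w1 mul1r.
apply: eq_bigr => i _.
have [->|wi] := eqVneq (w i) 0; first by rewrite !mul0r.
by rewrite cube_ptE (face_vertex_coord (face_w i wi) cj).
Qed.

Variables (x r : 'rV[R]_d) (S : {set B}).
Hypotheses (face_x : in_face cp c m x) (cone_r : in_cone (in_face cp c m) x r).
Hypotheses (S_face : S \subset face_pts cp c m) (comb_S : proper_comb cp S x).

Lemma cone_face_coord0 j : c 0 j != 0 -> r 0 j = 0.
Proof.
move=> cj; have flat e y : in_face cp c m y -> 0 <= e * (y 0 j - x 0 j).
  by move=> fy; rewrite (face_coord fy cj) (face_coord face_x cj) subrr mulr0.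
have := cone_coord_ge cone_r (flat 1); have := cone_coord_ge cone_r (flat (-1)).
by rewrite mul1r mulN1r oppr_ge0 => r_le0 r_ge0; apply/eqP; rewrite eq_le r_le0.
Qed.

Lemma face_flip_gain j : r 0 j != 0 ->
  exists s v, [/\ s \in face_pts cp c m, v \in S & dot r (cp s - cp v) = `|r 0 j|].
Proof.
move=> rj; set b := 0 < r 0 j.
have xb : x 0 j != b%:R.
  apply/eqP => xjb; have towards_b y : in_face cp c m y ->
      0 <= (1 - 2 * b%:R) * (y 0 j - x 0 j).
    move=> [/(in_conv_cube_coord j)/andP[y_ge0 y_le1] _].
    by rewrite xjb /b; case: (0 < r 0 j) => /=; lra.
  have := cone_coord_ge cone_r towards_b; rewrite /b.
  by case: ltrgtP rj => //= r_sgn _; lra.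
have [v vS vj] := proper_comb_vertex comb_S xb.
have /eqP cv : dot c (cp v) == m by move: (subsetP S_face v vS); rewrite inE.
have cj0 : c 0 j = 0 by apply: contraNeq rj => /cone_face_coord0 ->.
exists (set_coord v j b), v; split=> //.
  by rewrite inE dot_set_coord cv cj0 mul0r addr0.
rewrite dotBr dot_set_coord addrAC subrr add0r vj /b.
case: ltrgtP rj => //= r_sgn _.
  by rewrite gtr0_norm //; ring.
by rewrite ltr0_norm //; ring.
Qed.

Lemma dirw_face_ge : r != 0 -> (Num.sqrt d%:R)^-1 <= dirw cp (face_pts cp c m) r S.
Proof.
move=> r0; have [j0 rj0] := rV0Pn _ r0.
have [j _ max_j] := @arg_maxP _ _ _ j0 predT (fun k => `|r 0 k|) isT.
have rj : r 0 j != 0.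
  by rewrite -normr_gt0 (lt_le_trans _ (max_j j0 isT)) ?normr_gt0.
have [s [v [sF vS gain]]] := face_flip_gain rj.
apply: le_trans (le_dirw _ r sF vS); rewrite dotZl gain.
have sqrt_d_gt0 : 0 < Num.sqrt (d%:R : R).
  by rewrite sqrtr_gt0 ltr0n (leq_ltn_trans (leq0n j) (ltn_ord j)).
rewrite mulrC ler_pdivlMr ?enorm_gt0 // mulrC ler_pdivrMr // mulrC.
by apply: enorm_le_sqrt_dim => // k; apply: max_j.
Qed.

End CubeFaces.

Section WholeCube.
Variables (R : rcfType) (d : nat).
Notation cp := (@cube_pt R d).
Notation B := {ffun 'I_d -> bool}.

Lemma face_pts_whole : face_pts cp 0 0 = setT.
Proof. by apply/setP => i; rewrite !inE dot0l eqxx. Qed.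

Lemma in_face_whole y : in_conv cp setT y -> in_face cp 0 0 y.
Proof. by split; rewrite ?dot0l. Qed.

Lemma in_conv_vertex (i : B) : in_conv cp setT (cp i).
Proof.
apply: (@proper_comb_in_conv _ _ _ _ [set i]).
by exists (fun _ => 1); rewrite !big_set1 scale1r.
Qed.

Definition origin_pt : B := [ffun=> false].

Lemma face_ok_whole : face_ok cp 0 0.
Proof.
split=> [j | ]; first by rewrite dot0l.
by exists (cp origin_pt); split; [apply: in_conv_vertex | rewrite dot0l].
Qed.

Definition basis_pt (j : 'I_d) : B := [ffun k => k == j].
Definition basis_set : {set B} := [set basis_pt j | j : 'I_d].
Definition basis_bary : 'rV[R]_d := \sum_(i in basis_set) d%:R^-1 *: cp i.
Definition bary_dir : 'rV[R]_d := d%:R *: (cp origin_pt - basis_bary).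

Lemma basis_pt_inj : injective basis_pt.
Proof. by move=> j k /ffunP/(_ j); rewrite !ffunE eqxx => /esym/eqP. Qed.

Lemma basis_bary_coord j : basis_bary 0 j = d%:R^-1.
Proof.
rewrite sum_scale_coord big_imset /=; last by move=> ? ? _ _; apply: basis_pt_inj.
rewrite (bigD1 j) //= cube_ptE ffunE eqxx mulr1 big1 ?addr0 // => k kj.
by rewrite cube_ptE ffunE eq_sym (negbTE kj) mulr0.
Qed.

Lemma sum_basis_pt_coord j : \sum_(k < d) cp (basis_pt j) 0 k = 1.
Proof.
rewrite (bigD1 j) //= cube_ptE ffunE eqxx big1 ?addr0 // => k kj.
by rewrite cube_ptE ffunE (negbTE kj).
Qed.

Lemma cone_bary_dir : in_cone (in_face cp 0 0) basis_bary bary_dir.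
Proof.
exists 1%N, (fun _ => d%:R), (fun _ => cp origin_pt).
split=> [_|]; first exact: ler0n.
by split=> [_|]; [apply/in_face_whole/in_conv_vertex | rewrite big_ord1].
Qed.

Hypothesis d_gt0 : (0 < d)%N.

Lemma proper_comb_basis : proper_comb cp basis_set basis_bary.
Proof.
exists (fun _ => d%:R^-1); split; first by move=> i _; rewrite invr_gt0 ltr0n.
split=> //; rewrite sumr_const card_imset; last exact: basis_pt_inj.
by rewrite card_ord -(mulr_natr d%:R^-1) mulVf // pnatr_eq0 -lt0n.
Qed.

Lemma bary_dir_coord j : bary_dir 0 j = -1.
Proof.
rewrite !mxE ffunE mulr0n basis_bary_coord sub0r mulrN mulfV //.
by rewrite pnatr_eq0 -lt0n.
Qed.

Lemma dot_bary_dir u : dot bary_dir u = - \sum_(k < d) u 0 k.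
Proof.
by rewrite /dot -sumrN; apply: eq_bigr => k _; rewrite bary_dir_coord mulN1r.
Qed.

Lemma enorm_bary_dir : enorm bary_dir = Num.sqrt d%:R.
Proof.
rewrite /enorm dot_bary_dir; under eq_bigr do rewrite bary_dir_coord.
by rewrite sumr_const card_ord mulNrn opprK.
Qed.

Lemma bary_dir_neq0 : bary_dir != 0.
Proof.
apply/rV0Pn; exists (Ordinal d_gt0).
by rewrite bary_dir_coord oppr_eq0 oner_eq0.
Qed.

Lemma dirw_basis_le T : dirw cp T bary_dir basis_set <= (Num.sqrt d%:R)^-1.
Proof.
have c_ge0 : 0 <= (Num.sqrt (d%:R : R))^-1 by rewrite invr_ge0 sqrtr_ge0.
apply: (big_ind (fun z => z <= _)) => // [? ? ? ?|s _].
  by rewrite ge_max; apply/andP.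
apply: (big_ind (fun z => z <= _)) => // [? ? ? ?|_ /imsetP[j _ ->]].
  by rewrite ge_max; apply/andP.
rewrite dotZl enorm_bary_dir dotBr !dot_bary_dir sum_basis_pt_coord.
rewrite -[X in _ <= X]mulr1 ler_wpM2l //.
have : 0 <= \sum_(k < d) cp s 0 k by apply: sumr_ge0 => k _; rewrite cube_ptE ler0n.
lra.
Qed.

End WholeCube.

Theorem lemma1 (R : rcfType) (d : nat) (hd : (0 < d)%N) :
  is_inf (PWidth_val (@cube_pt R d)) (Num.sqrt (d%:R : R))^-1.
Proof.
split=> [w [c [m [x [r [fo [fx [cr [r0 [[S [sub [comb ->]]] _]]]]]]]]] | z lb_z].
  exact (dirw_face_ge fo fx cr sub comb r0).
have fo := face_ok_whole R d.
have fx := in_face_whole (proper_comb_in_conv (proper_comb_basis R hd)).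
have cr := cone_bary_dir R d; have r0 := bary_dir_neq0 R hd.
have sub : basis_set d \subset face_pts (@cube_pt R d) 0 0.
  by rewrite face_pts_whole subsetT.
apply: lb_z; exists 0, 0, (basis_bary R d), (bary_dir R d).
do 4 (split; first by []).
split=> [|S subS comb]; last exact (dirw_face_ge fo fx cr subS comb r0).
exists (basis_set d); split=> //; split; first exact: proper_comb_basis.
apply/eqP; rewrite eq_le dirw_basis_le // andbT.
exact (dirw_face_ge fo fx cr sub (proper_comb_basis R hd) r0).
Qed.
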